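(* Let $u=(a,b,c)$ and $v=(a',b',c')$ be nonzero vectors in $\mathbb{Z}^3$ with $a^2+b^2+c^2=a'^2+b'^2+c'^2$, $aa'+bb'+cc'=0$ and $\gcd(a,b,c,a',b',c')=1$. Let $\square$ be the square $\mathrm{conv}\{0,u,v,u+v\}\subset\mathbb{R}^3$. Put $d=\gcd(a,b,c)$, $d'=\gcd(a',b',c')$ and $D=\gcd(bc'-b'c,\ ac'-a'c,\ ab'-a'b)$. Then the Ehrhart polynomial of $\square$ is $$E_\square(t)=Dt^2+(d+d')t+1.$$
   Context: For a polytope $P\subset\mathbb{R}^n$ with vertices in $\mathbb{Z}^n$, its Ehrhart polynomial $E_P$ is the polynomial satisfying $E_P(t)=\#(tP\cap\mathbb{Z}^n)$ for all positive integers $t$. *)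

From HB Require Import structures.
From mathcomp Require Import all_boot all_order all_algebra.
From mathcomp Require Import reals.
Set Implicit Arguments. Unset Strict Implicit. Unset Printing Implicit Defensive.
Import Order.TTheory GRing.Theory Num.Theory.
Local Open Scope ring_scope.

Definition vec3 (T : nmodType) (x y z : T) : 'rV[T]_3 :=
  \row_(i < 3) nth 0 [:: x; y; z] i.

Definition conv (R : realType) (P : seq 'rV[R]_3) : 'rV[R]_3 -> Prop :=
  fun x => exists w : 'I_(size P) -> R,
    (forall i, 0 <= w i) /\ \sum_(i < size P) w i = 1 /\
    x = \sum_(i < size P) w i *: P`_i.

Definition dilate (R : realType) (t : nat) (A : 'rV[R]_3 -> Prop) :
  'rV[R]_3 -> Prop := fun y => exists2 x, A x & y = t%:R *: x.

Definition int_pt (R : realType) (z : 'rV[int]_3) : 'rV[R]_3 :=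
  map_mx (fun k : int => k%:~R) z.

Definition lattice_card (R : realType) (A : 'rV[R]_3 -> Prop) (n : nat) :=
  exists s : seq 'rV[int]_3, uniq s /\
    (forall z, z \in s <-> A (@int_pt R z)) /\ size s = n.

Definition ehrhart_poly (R : realType) (P : 'rV[R]_3 -> Prop)
  (E : {poly rat}) : Prop :=
  forall t : nat, (0 < t)%N ->
    exists n : nat, lattice_card (dilate t P) n /\ n%:R = E.[t%:R].

From HB Require Import structures.
From mathcomp Require Import all_boot all_order all_algebra.
From mathcomp Require Import reals.
From mathcomp Require Import ring lra zify.
Import Order.TTheory GRing.Theory Num.Theory.
Local Open Scope ring_scope.

(* Write the square as {s u + r v : 0 <= s, r <= 1}.  As u and v are
   independent, an integer point s u + r v has D s and D r integral (Cramer's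
   rule with u x v, whose entries have gcd D), so the lattice points of t times
   the square are the (i u + j v) / D with 0 <= i, j <= t D and D | i u + j v.
   This condition is D-periodic in i and in j, so their number is t^2 times the
   count over one period square, plus t times the counts on the two edges
   through 0, plus 1.  On an edge, D | i u iff D | i d, which has d solutions
   modulo D.  On the period square, the Smith normal form
   (u v) = U diag(d0, d1) V gives D = d0 d1 and turns the condition into
   D | d0 x and D | d1 y for (x, y) = V (i, j), which has d0 d1 = D solutions. *)

Section PeriodicSums.

Variables (F : nat -> nat) (n : nat).
Hypothesis F_periodic : forall i, F (i + n)%N = F i.

Lemma periodicD k i : F (i + k * n)%N = F i.
Proof.
by elim: k i => [|k IHk] i; rewrite ?mul0n ?addn0 // mulSn addnA IHk F_periodic.
Qed.

Lemma sum_periodic t : (\sum_(i < t * n) F i = t * \sum_(i < n) F i)%N.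
Proof.
elim: t => [|t IHt]; first by rewrite mul0n big_ord0.
rewrite mulSn addnC big_split_ord /= IHt addnC; congr (_ + _)%N.
by apply: eq_bigr => i _; rewrite addnC periodicD.
Qed.

Lemma sum_periodic_closed t :
  (\sum_(i < (t * n).+1) F i = t * \sum_(i < n) F i + F 0)%N.
Proof.
by rewrite big_ord_recr /= sum_periodic -[X in F X]add0n periodicD.
Qed.

End PeriodicSums.

Lemma sum2_periodic_closed (F : nat -> nat -> nat) n t :
  (forall i j, F (i + n)%N j = F i j) -> (forall i j, F i (j + n)%N = F i j) ->
  (\sum_(i < (t * n).+1) \sum_(j < (t * n).+1) F i j =
   t * t * (\sum_(i < n) \sum_(j < n) F i j) + t * \sum_(j < n) F 0 j
   + t * \sum_(i < n) F i 0 + F 0 0)%N.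
Proof.
move=> F_per1 F_per2.
under eq_bigr do rewrite sum_periodic_closed //.
rewrite big_split /= -big_distrr /= (sum_periodic_closed (F^~ 0)) //.
rewrite (sum_periodic_closed (fun i => \sum_(j < n) F i j)).
  by rewrite mulnDr mulnA !addnA.
by move=> i; apply: eq_bigr => j _; rewrite F_per1.
Qed.

Lemma sum_dvdn_ord n k : (0 < k)%N -> (k %| n)%N ->
  (\sum_(i < n) (k %| i : nat) = n %/ k)%N.
Proof.
move=> k_gt0 /dvdnP [m ->]; rewrite mulnK //.
rewrite (sum_periodic (fun i => (k %| i : nat))); last by move=> i; rewrite dvdn_addl.
case: k k_gt0 => // k _; rewrite big_ord_recl big1 ?addn0 ?muln1 // => i _.
rewrite lift0; apply/eqP; rewrite eqb0; apply/negP => /dvdn_leq.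
by move=> /(_ isT); rewrite ltnS leqNgt ltn_ord.
Qed.

Lemma sum_dvdz_mul (m g : int) : m != 0 -> (g %| m)%Z ->
  (\sum_(j < `|m|) ((m %| (g * j%:Z)%R)%Z : nat) = `|g|)%N.
Proof.
move=> m_neq0 g_dvd_m; set h := (m %/ g)%Z.
have m_eq : m = g * h by rewrite mulrC divzK.
have : g * h != 0 by rewrite -m_eq.
rewrite mulf_eq0 negb_or => /andP [g_neq0 h_neq0].
have dvd_m_eq x : (m %| g * x)%Z = (h %| x)%Z by rewrite m_eq dvdz_mul2l.
under eq_bigr => j _ do rewrite dvd_m_eq dvdzE absz_nat.
rewrite sum_dvdn_ord ?absz_gt0 // m_eq abszM ?mulnK ?absz_gt0 //.
exact: dvdn_mull.
Qed.

Lemma mulmx2E (K : pzSemiRingType) p q (A : 'M[K]_(p, 2)) (B : 'M_(2, q)) i j :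
  (A *m B) i j = A i 0 * B 0 j + A i 1 * B 1 j.
Proof.
rewrite mxE big_ord_recl big_ord1.
by have -> : lift ord0 ord0 = 1 :> 'I_2 by apply: val_inj.
Qed.

Lemma mulmx3E (K : pzSemiRingType) p q (A : 'M[K]_(p, 3)) (B : 'M_(3, q)) i j :
  (A *m B) i j = A i 0 * B 0 j + A i 1 * B 1 j + A i 2 * B 2 j.
Proof.
rewrite mxE !big_ord_recl big_ord0 addr0 addrA.
have -> : lift ord0 (lift ord0 ord0) = 2 :> 'I_3 by apply: val_inj.
by have -> : lift ord0 ord0 = 1 :> 'I_3 by apply: val_inj.
Qed.

Lemma det2_unit {V Vi : 'M[int]_2} : V *m Vi = 1 ->
  (V 0 0 * V 1 1 - V 0 1 * V 1 0) * (Vi 0 0 * Vi 1 1 - Vi 0 1 * Vi 1 0) = 1.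
Proof.
move=> VVi; have VVi_at i j := congr1 (fun A : 'M[int]_2 => A i j) VVi.
have := VVi_at 0 0; have := VVi_at 0 1; have := VVi_at 1 0; have := VVi_at 1 1.
rewrite !mulmx2E !mxE /= => e11 e10 e01 e00.
transitivity ((V 0 0 * Vi 0 0 + V 0 1 * Vi 1 0) * (V 1 0 * Vi 0 1 + V 1 1 * Vi 1 1)
            - (V 0 0 * Vi 0 1 + V 0 1 * Vi 1 1) * (V 1 0 * Vi 0 0 + V 1 1 * Vi 1 0)).
  ring.
by rewrite e00 e01 e10 e11; ring.
Qed.

Section ModularReindexing.

Variables (m : int) (V Vi : 'M[int]_2).
Hypotheses (m_neq0 : m != 0) (ViK : Vi *m V = 1).

Lemma unimodular_dvdz x y :
  (m %| (V 0 0 * x + V 0 1 * y)%R)%Z -> (m %| (V 1 0 * x + V 1 1 * y)%R)%Z ->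
  (m %| x)%Z /\ (m %| y)%Z.
Proof.
have ViK_at i j := congr1 (fun A : 'M[int]_2 => A i j) ViK.
have := ViK_at 0 0; have := ViK_at 0 1; have := ViK_at 1 0; have := ViK_at 1 1.
rewrite !mulmx2E !mxE /= => e11 e10 e01 e00 dX dY; split.
  have -> : x = Vi 0 0 * (V 0 0 * x + V 0 1 * y) + Vi 0 1 * (V 1 0 * x + V 1 1 * y).
    transitivity ((Vi 0 0 * V 0 0 + Vi 0 1 * V 1 0) * x
                  + (Vi 0 0 * V 0 1 + Vi 0 1 * V 1 1) * y); last ring.
    by rewrite e00 e01; ring.
  by rewrite rpredD ?dvdz_mull.
have -> : y = Vi 1 0 * (V 0 0 * x + V 0 1 * y) + Vi 1 1 * (V 1 0 * x + V 1 1 * y).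
  transitivity ((Vi 1 0 * V 0 0 + Vi 1 1 * V 1 0) * x
                + (Vi 1 0 * V 0 1 + Vi 1 1 * V 1 1) * y); last ring.
  by rewrite e10 e11; ring.
by rewrite rpredD ?dvdz_mull.
Qed.

Lemma dvdz_mul_modz e x : (m %| e * (x %% m)%Z)%Z = (m %| e * x)%Z.
Proof. by rewrite !(sameP dvdz_mod0P eqP) modzMmr. Qed.

Local Notation n := `|m|%N.

Lemma ord_eqz_dvd (i j : 'I_n) : (m %| (i%:Z - j%:Z)%R)%Z -> i = j.
Proof.
have ord_mod (k : 'I_n) : (k%:Z %% m)%Z = k.
  by rewrite -modz_abs modz_small // ltz_nat ltn_ord andbT.
by rewrite -eqz_mod_dvd !ord_mod => /eqP [] /val_inj.
Qed.

Lemma sum_unimodular_mod (Q : int -> int -> bool) :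
  (forall x y, Q (x %% m)%Z (y %% m)%Z = Q x y) ->
  (\sum_(i < n) \sum_(j < n)
     Q (V 0 0 * i%:Z + V 0 1 * j%:Z)%R (V 1 0 * i%:Z + V 1 1 * j%:Z)%R
   = \sum_(i < n) \sum_(j < n) Q i j)%N.
Proof.
move=> Q_mod.
have mod_lt x : (`|(x %% m)%Z| < n)%N.
  by have := modz_ge0 x m_neq0; have := ltz_mod x m_neq0; lia.
pose mo x : 'I_n := Ordinal (mod_lt x).
have moE x : (mo x)%:Z = (x %% m)%Z by have := modz_ge0 x m_neq0; rewrite /=; lia.
pose f (p : 'I_n * 'I_n) :=
  (mo (V 0 0 * p.1%:Z + V 0 1 * p.2%:Z), mo (V 1 0 * p.1%:Z + V 1 1 * p.2%:Z)).
have f_inj : injective f.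
  move=> [i j] [i' j'] [/(congr1 Posz) + /(congr1 Posz)].
  rewrite !moE => /eqP + /eqP; rewrite !eqz_mod_dvd => dX dY.
  have [di dj] : (m %| (i%:Z - i'%:Z)%R)%Z /\ (m %| (j%:Z - j'%:Z)%R)%Z.
    by apply: unimodular_dvdz; [move: dX | move: dY]; congr (_ %| _)%Z; ring.
  by congr (_, _); apply: ord_eqz_dvd.
rewrite !pair_bigA [RHS](reindex_inj f_inj).
by apply: eq_bigr => p _; rewrite /= !moE Q_mod.
Qed.

End ModularReindexing.

Lemma conv_square (R : realType) (u v x : 'rV[R]_3) :
  conv [:: 0; u; v; u + v] x <->
  exists s r : R, [/\ 0 <= s <= 1, 0 <= r <= 1 & x = s *: u + r *: v].
Proof.
split.
  move=> [w [w0 [w1 ->]]].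
  move: w1; rewrite /= !big_ord_recr big_ord0 /= => w1.
  set w_0 := w _ in w1 *; set w_1 := w _ in w1 *.
  set w_2 := w _ in w1 *; set w_3 := w _ in w1 *.
  rewrite big_ord0.
  have h0 : 0 <= w_0 := w0 _. have h1 : 0 <= w_1 := w0 _.
  have h2 : 0 <= w_2 := w0 _. have h3 : 0 <= w_3 := w0 _.
  exists (w_1 + w_3), (w_2 + w_3); split.
  - apply/andP; split; lra.
  - apply/andP; split; lra.
  - by apply/rowP => k; rewrite !mxE; ring.
move=> [s [r [/andP [s0 s1] /andP [r0 r1] ->]]].
pose w := fun i : 'I_4 => [:: (1 - s) * (1 - r); s * (1 - r); (1 - s) * r; s * r]`_i.
exists w; split.
  move=> [[|[|[|[|i]]]] Hi] //=; rewrite /w /=; try (apply: mulr_ge0; lra).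
split.
  rewrite /= !big_ord_recr big_ord0 /= /w /=; ring.
rewrite /= !big_ord_recr big_ord0 /= /w /=.
by apply/rowP => k; rewrite !mxE; ring.
Qed.

Lemma dilate_square (R : realType) (t : nat) (u v y : 'rV[R]_3) : (0 < t)%N ->
  dilate t (conv [:: 0; u; v; u + v]) y <->
  exists s r : R, [/\ 0 <= s <= t%:R, 0 <= r <= t%:R & y = s *: u + r *: v].
Proof.
move=> t0; have tp : (0 : R) < t%:R by rewrite ltr0n.
split.
  move=> [x /conv_square [s [r [/andP [s0 s1] /andP [r0 r1] ->]]] ->].
  exists (t%:R * s), (t%:R * r); split.
  - apply/andP; split; nra.
  - apply/andP; split; nra.
  - by rewrite scalerDr !scalerA.
move=> [s [r [/andP [s0 s1] /andP [r0 r1] ->]]].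
exists ((s / t%:R) *: u + (r / t%:R) *: v).
  apply/conv_square; exists (s / t%:R), (r / t%:R); split => //.
  - apply/andP; split; first by apply: divr_ge0; lra.
    by rewrite ler_pdivrMr // mul1r.
  - apply/andP; split; first by apply: divr_ge0; lra.
    by rewrite ler_pdivrMr // mul1r.
rewrite scalerDr !scalerA !mulrA !(mulrC t%:R) -!mulrA divff ?mulr1 //.
by rewrite lt0r_neq0.
Qed.

Lemma lattice_card_image (R : realType) (A : 'rV[R]_3 -> Prop) (T : finType)
    (P : pred T) (f : T -> 'rV[int]_3) :
  {in P &, injective f} -> (forall z, A (int_pt R z) <-> exists2 p, P p & z = f p) ->
  lattice_card A #|P|.
Proof.
move=> f_inj A_image; exists [seq f p | p <- enum P]; split; last split.
- by rewrite map_inj_in_uniq ?enum_uniq // => p q; rewrite !mem_enum; apply: f_inj.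
- move=> z; rewrite A_image; split.
    by case/mapP => p; rewrite mem_enum => Pp ->; exists p.
  by case=> p Pp ->; apply: map_f; rewrite mem_enum.
- by rewrite size_map -cardE.
Qed.

Lemma nth_intr (R : realType) (x y z : int) (k : 'I_3) :
  ([:: x%:~R; y%:~R; z%:~R] : seq R)`_k = ([:: x; y; z]`_k)%:~R.
Proof. by case: k => [[|[|[|]]] ?]. Qed.

Lemma scale_intr_bounds {R : realType} {x : R} {X n : int} (t : nat) : 0 < n ->
  x * n%:~R = X%:~R -> (0 <= x <= t%:R) = (0 <= X <= t%:Z * n).
Proof.
move=> n_gt0 xX; have n_gt0R : 0 < n%:~R :> R by rewrite ltr0z.
by rewrite -(ler0z R) -(ler_int R) -xX intrM pmulr_lge0 // ler_pM2r.
Qed.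

Definition cross_gcd (a b c a' b' c' : int) : int :=
  gcdz (b * c' - b' * c) (gcdz (a * c' - a' * c) (a * b' - a' * b)).

Lemma dvdz_gcd3 x y z :
  [/\ (gcdz x (gcdz y z) %| x)%Z, (gcdz x (gcdz y z) %| y)%Z
    & (gcdz x (gcdz y z) %| z)%Z].
Proof.
split; first exact: dvdz_gcdl.
  exact: dvdz_trans (dvdz_gcdr _ _) (dvdz_gcdl _ _).
exact: dvdz_trans (dvdz_gcdr _ _) (dvdz_gcdr _ _).
Qed.

Section SpannedLattice.

Variables a b c a' b' c' : int.

Local Notation D := (cross_gcd a b c a' b' c').
Local Notation d := (gcdz a (gcdz b c)).
Local Notation d' := (gcdz a' (gcdz b' c')).
Local Notation u := (vec3 a%:~R b%:~R c%:~R).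
Local Notation v := (vec3 a'%:~R b'%:~R c'%:~R).

Definition dvd_comb (m i j : int) : bool :=
  [&& m %| i * a + j * a', m %| i * b + j * b' & m %| i * c + j * c']%Z.

Lemma cross_gcd_neq0 : (a, b, c) != (0, 0, 0) ->
  a ^+ 2 + b ^+ 2 + c ^+ 2 = a' ^+ 2 + b' ^+ 2 + c' ^+ 2 ->
  a * a' + b * b' + c * c' = 0 -> D != 0.
Proof.
move=> u_neq0 norm_eq orth; apply: contraNneq u_neq0 => /eqP.
rewrite /cross_gcd !gcdz_eq0 => /and3P [/eqP w1 /eqP w2 /eqP w3].
have lagrange : (a ^+ 2 + b ^+ 2 + c ^+ 2) * (a' ^+ 2 + b' ^+ 2 + c' ^+ 2) =
    (a * a' + b * b' + c * c') ^+ 2 + (b * c' - b' * c) ^+ 2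
    + (a * c' - a' * c) ^+ 2 + (a * b' - a' * b) ^+ 2 by ring.
move: lagrange; rewrite -norm_eq orth w1 w2 w3 => /eqP.
rewrite mulf_eq0 orbb !paddr_eq0 ?addr_ge0 ?sqr_ge0 // !sqrf_eq0 -andbA.
by case/and3P => /eqP-> /eqP-> /eqP->.
Qed.

Lemma gcd3_dvd_cross_gcd : (d %| D)%Z /\ (d' %| D)%Z.
Proof.
have [ha hb hc] := dvdz_gcd3 a b c; have [ha' hb' hc'] := dvdz_gcd3 a' b' c'.
rewrite /cross_gcd !dvdz_gcd; split; apply/and3P; split; apply: rpredB;
  solve [exact: dvdz_mulr | exact: dvdz_mull].
Qed.

Lemma dvd_combDl m i j k : (m %| k)%Z -> dvd_comb m (i + k) j = dvd_comb m i j.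
Proof.
move=> m_dvd_k; have E x y : (i + k) * x + j * y = (i * x + j * y) + k * x by ring.
by rewrite /dvd_comb !E !(rpredDr _ (dvdz_mulr _ m_dvd_k)).
Qed.

Lemma dvd_combDr m i j k : (m %| k)%Z -> dvd_comb m i (j + k) = dvd_comb m i j.
Proof.
move=> m_dvd_k; have E x y : i * x + (j + k) * y = (i * x + j * y) + k * y by ring.
by rewrite /dvd_comb !E !(rpredDr _ (dvdz_mulr _ m_dvd_k)).
Qed.

Lemma dvd_comb0l m (j : nat) : dvd_comb m 0 j = (m %| d' * j%:Z)%Z.
Proof.
have -> : d' * j%:Z = gcdz (j%:Z * a') (gcdz (j%:Z * b') (j%:Z * c')).
  by rewrite -!mulz_gcdr mulrC.
by rewrite /dvd_comb !mul0r !add0r !dvdz_gcd.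
Qed.

Lemma dvd_comb0r m (i : nat) : dvd_comb m i 0 = (m %| d * i%:Z)%Z.
Proof.
have -> : d * i%:Z = gcdz (i%:Z * a) (gcdz (i%:Z * b) (i%:Z * c)).
  by rewrite -!mulz_gcdr mulrC.
by rewrite /dvd_comb !mul0r !addr0 !dvdz_gcd.
Qed.

Lemma cross_gcd_indep x y : D != 0 ->
  x * a = y * a' -> x * b = y * b' -> x * c = y * c' -> x = 0 /\ y = 0.
Proof.
move=> D_neq0 ea eb ec.
have cross_eq0 e : e * (b * c' - b' * c) = 0 -> e * (a * c' - a' * c) = 0 ->
    e * (a * b' - a' * b) = 0 -> e = 0.
  move=> /eqP w1 /eqP w2 /eqP w3; apply/eqP; apply: contraNT D_neq0 => e_neq0.
  move: w1 w2 w3; rewrite !mulf_eq0 (negbTE e_neq0) /=.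
  by rewrite /cross_gcd !gcdz_eq0 => -> -> ->.
split; apply: cross_eq0.
- by transitivity (x * b * c' - b' * (x * c)); [ring | rewrite eb ec; ring].
- by transitivity (x * a * c' - a' * (x * c)); [ring | rewrite ea ec; ring].
- by transitivity (x * a * b' - a' * (x * b)); [ring | rewrite ea eb; ring].
- by transitivity (b * (y * c') - y * b' * c); [ring | rewrite -eb -ec; ring].
- by transitivity (a * (y * c') - y * a' * c); [ring | rewrite -ea -ec; ring].
- by transitivity (a * (y * b') - y * a' * b); [ring | rewrite -ea -eb; ring].
Qed.

Lemma cross_gcd_cramer {R : realType} {z : 'rV[int]_3} {s r : R} :
  int_pt R z = s *: u + r *: v ->
  exists I J : int, [/\ s * D%:~R = I%:~R, r * D%:~R = J%:~R &
    forall k : 'I_3, D * z 0 k = I * [:: a; b; c]`_k + J * [:: a'; b'; c']`_k].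
Proof.
move=> z_eq.
have z_entry (k : 'I_3) : (z 0 k)%:~R =
    s * ([:: a; b; c]`_k)%:~R + r * ([:: a'; b'; c']`_k)%:~R :> R.
  by have := congr1 (fun A : 'rV[R]_3 => A 0 k) z_eq; rewrite !mxE !nth_intr.
have := z_entry 0; have := z_entry 1; have := z_entry 2; rewrite /= => ez ey ex.
set x := z 0 0 in ex *; set y := z 0 1 in ey *; set w := z 0 2 in ez *.
(* Cramer's rule: the Bezout combination giving D from the entries of u x v,
   applied to z x v and u x z, gives D s and D r. *)
have [p1 [q1 B1]] := Bezoutz (a * c' - a' * c) (a * b' - a' * b).
have [p0 [q0 B0]] :=
  Bezoutz (b * c' - b' * c) (gcdz (a * c' - a' * c) (a * b' - a' * b)).
have D_eq : D = p0 * (b * c' - b' * c)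
                + q0 * (p1 * (a * c' - a' * c) + q1 * (a * b' - a' * b)).
  by rewrite B1 B0.
exists (p0 * (y * c' - w * b')
        + q0 * (p1 * (x * c' - w * a') + q1 * (x * b' - y * a'))).
exists (p0 * (b * w - c * y)
        + q0 * (p1 * (a * w - c * x) + q1 * (a * y - b * x))).
have sI : s * D%:~R = (p0 * (y * c' - w * b')
    + q0 * (p1 * (x * c' - w * a') + q1 * (x * b' - y * a')))%:~R :> R.
  by rewrite D_eq !(intrD, intrM, intrB, intrN) ex ey ez; ring.
have rJ : r * D%:~R = (p0 * (b * w - c * y)
    + q0 * (p1 * (a * w - c * x) + q1 * (a * y - b * x)))%:~R :> R.
  by rewrite D_eq !(intrD, intrM, intrB, intrN) ex ey ez; ring.
split => // k; apply: (@intr_inj R).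
by rewrite intrD !intrM -sI -rJ z_entry; ring.
Qed.

Definition uv_mx : 'M[int]_(3, 2) :=
  \matrix_(k, l) (if l == 0 then [:: a; b; c]`_k else [:: a'; b'; c']`_k).

Section SmithCoordinates.

Variables (s : seq int) (U : 'M[int]_3) (V : 'M[int]_2).
Hypotheses (U_unit : U \in unitmx) (V_unit : V \in unitmx).
Local Notation S := (\matrix_(i < 3, j < 2) (s`_i *+ (i == j :> nat))).
Hypothesis uv_smith : uv_mx = U *m S *m V.

Local Notation d0 := s`_0.
Local Notation d1 := s`_1.

Lemma smith_entry k l : uv_mx k l = U k 0 * d0 * V 0 l + U k 1 * d1 * V 1 l.
Proof.
rewrite uv_smith mulmx2E !mulmx3E !mxE /= (_ : 1 %% 3 = 1)%N //.
by rewrite !mulr0n !mulr1n; ring.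
Qed.

Lemma smith_u (k : 'I_3) : [:: a; b; c]`_k = U k 0 * d0 * V 0 0 + U k 1 * d1 * V 1 0.
Proof. by rewrite -smith_entry mxE. Qed.

Lemma smith_v (k : 'I_3) : [:: a'; b'; c']`_k = U k 0 * d0 * V 0 1 + U k 1 * d1 * V 1 1.
Proof. by rewrite -smith_entry mxE. Qed.

Lemma smith_coord k l :
  invmx U k 0 * uv_mx 0 l + invmx U k 1 * uv_mx 1 l + invmx U k 2 * uv_mx 2 l =
  s`_k *+ (k == 0 :> nat) * V 0 l + s`_k *+ (k == 1 :> nat) * V 1 l.
Proof.
have := congr1 (fun A : 'M[int]_(3, 2) => A k l) (_ : invmx U *m uv_mx = S *m V).
rewrite mulmx3E mulmx2E !mxE; apply.
by rewrite uv_smith !mulmxA mulVmx // mul1mx.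
Qed.

Lemma dvd_comb_smith m i j :
  dvd_comb m i j = (m %| (d0 * (V 0 0 * i + V 0 1 * j))%R)%Z
                   && (m %| (d1 * (V 1 0 * i + V 1 1 * j))%R)%Z.
Proof.
have E (k : 'I_3) : i * [:: a; b; c]`_k + j * [:: a'; b'; c']`_k =
    U k 0 * (d0 * (V 0 0 * i + V 0 1 * j)) + U k 1 * (d1 * (V 1 0 * i + V 1 1 * j)).
  by rewrite smith_u smith_v; ring.
have C (k : 'I_3) : invmx U k 0 * (i * a + j * a') + invmx U k 1 * (i * b + j * b')
      + invmx U k 2 * (i * c + j * c') =
    s`_k *+ (k == 0 :> nat) * (V 0 0 * i + V 0 1 * j)
      + s`_k *+ (k == 1 :> nat) * (V 1 0 * i + V 1 1 * j).
  have := smith_coord k 0; have := smith_coord k 1; rewrite !mxE /= => e1 e0.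
  transitivity (i * (invmx U k 0 * a + invmx U k 1 * b + invmx U k 2 * c)
              + j * (invmx U k 0 * a' + invmx U k 1 * b' + invmx U k 2 * c')).
    ring.
  by rewrite e0 e1; ring.
apply/and3P/andP => [[ha hb hc] | [h0 h1]].
  have := C 0; have := C 1; rewrite /= (_ : 1 %% 3 = 1)%N //.
  rewrite !mulr0n !mulr1n !mul0r ?addr0 ?add0r.
  by move=> <- <-; split; do 2?[apply: rpredD]; exact: dvdz_mull.
have := E 0; have := E 1; have := E 2; rewrite /= => -> -> ->.
by split; apply: rpredD; exact: dvdz_mull.
Qed.

Lemma cross_gcd_smith : `|D|%N = (`|d0| * `|d1|)%N.
Proof.
have := smith_u 0; have := smith_u 1; have := smith_u 2.
have := smith_v 0; have := smith_v 1; have := smith_v 2.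
rewrite /= => ec' eb' ea' ec eb ea.
have := smith_coord 0 0; have := smith_coord 0 1.
have := smith_coord 1 0; have := smith_coord 1 1.
rewrite !mxE /= (_ : 1 %% 3 = 1)%N // !mulr0n !mulr1n !mul0r !addr0 !add0r.
move=> f1' f1 f0' f0.
set detV := V 0 0 * V 1 1 - V 0 1 * V 1 0.
have detV_unit := det2_unit (mulmxV V_unit).
have coord_minors : d0 * d1 * detV =
    (invmx U 0 0 * invmx U 1 1 - invmx U 0 1 * invmx U 1 0) * (a * b' - a' * b)
  + (invmx U 0 0 * invmx U 1 2 - invmx U 0 2 * invmx U 1 0) * (a * c' - a' * c)
  + (invmx U 0 1 * invmx U 1 2 - invmx U 0 2 * invmx U 1 1) * (b * c' - b' * c).
  rewrite /detV.
  transitivity ((d0 * V 0 0) * (d1 * V 1 1) - (d0 * V 0 1) * (d1 * V 1 0)); first ring.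
  by rewrite -f0 -f0' -f1 -f1'; ring.
have D_dvd : (D %| d0 * d1)%Z.
  have [D_dvd1 D_dvd2 D_dvd3] :=
    dvdz_gcd3 (b * c' - b' * c) (a * c' - a' * c) (a * b' - a' * b).
  rewrite -[d0 * d1]mulr1 -detV_unit mulrA coord_minors.
  by apply: dvdz_mulr; rewrite !rpredD // dvdz_mull.
have dvd_D : (d0 * d1 %| D)%Z.
  rewrite /cross_gcd !dvdz_gcd; apply/and3P; split; apply/dvdzP.
  - by exists ((U 1 0 * U 2 1 - U 1 1 * U 2 0) * detV); rewrite /detV eb ec eb' ec'; ring.
  - by exists ((U 0 0 * U 2 1 - U 0 1 * U 2 0) * detV); rewrite /detV ea ec ea' ec'; ring.
  - by exists ((U 0 0 * U 1 1 - U 0 1 * U 1 0) * detV); rewrite /detV ea eb ea' eb'; ring.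
apply/eqP; rewrite -abszM eqn_dvd.
by move: D_dvd dvd_D; rewrite !dvdzE => -> ->.
Qed.

Lemma sum_dvd_comb_smith : D != 0 ->
  (\sum_(i < `|D|) \sum_(j < `|D|) dvd_comb D i j = `|D|)%N.
Proof.
move=> D_neq0.
have [d0_dvd d1_dvd] : (d0 %| D)%Z /\ (d1 %| D)%Z.
  by rewrite !dvdzE cross_gcd_smith dvdn_mulr // dvdn_mull.
under eq_bigr do under eq_bigr do rewrite dvd_comb_smith.
rewrite (sum_unimodular_mod _ _ _ D_neq0 (mulVmx V_unit)
           (fun x y => (D %| d0 * x) && (D %| d1 * y))%Z); last first.
  by move=> x y; rewrite !dvdz_mul_modz.
rewrite [LHS](_ : _ = (\sum_(i < `|D|) (D %| (d0 * i%:Z)%R)%Z)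
                   * \sum_(j < `|D|) (D %| (d1 * j%:Z)%R)%Z)%N; last first.
  rewrite big_distrl; apply: eq_bigr => i _; rewrite big_distrr.
  by apply: eq_bigr => j _; rewrite /= mulnb.
rewrite !sum_dvdz_mul //.
by rewrite cross_gcd_smith.
Qed.

End SmithCoordinates.

Lemma sum_dvd_comb_period : D != 0 ->
  (\sum_(i < `|D|) \sum_(j < `|D|) dvd_comb D i j = `|D|)%N.
Proof.
have [U U_unit [V V_unit [s _ uv_smith]]] := int_Smith_normal_form uv_mx.
exact: (sum_dvd_comb_smith _ _ _ U_unit V_unit uv_smith).
Qed.

Lemma sum_dvd_comb_dilate t : D != 0 ->
  (\sum_(i < (t * `|D|).+1) \sum_(j < (t * `|D|).+1) dvd_comb D i j
   = t * t * `|D| + t * `|d'| + t * `|d| + 1)%N.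
Proof.
move=> D_neq0; have [d_dvd d'_dvd] := gcd3_dvd_cross_gcd.
have D_dvd_absD : (D %| `|D|%:Z)%Z by rewrite dvdzE absz_nat.
rewrite (sum2_periodic_closed (fun i j : nat => dvd_comb D i j : nat)); first last.
- by move=> i j; rewrite PoszD dvd_combDr.
- by move=> i j; rewrite PoszD dvd_combDl.
rewrite sum_dvd_comb_period //.
under eq_bigr do rewrite dvd_comb0l.
under [X in (_ + t * X)%N]eq_bigr do rewrite dvd_comb0r.
by rewrite dvd_comb0l mulr0 dvdz0 !sum_dvdz_mul.
Qed.

Definition comb_div (i j : int) : 'rV[int]_3 :=
  \row_k ((i * [:: a; b; c]`_k + j * [:: a'; b'; c']`_k) %/ D)%Z.

Lemma comb_divK {i j} : dvd_comb D i j ->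
  forall k, comb_div i j 0 k * D = i * [:: a; b; c]`_k + j * [:: a'; b'; c']`_k.
Proof. by case/and3P => ha hb hc k; rewrite mxE divzK //; case: k => [[|[|[|]]] ?]. Qed.

Lemma comb_div_inj {i j i' j'} : D != 0 -> dvd_comb D i j -> dvd_comb D i' j' ->
  comb_div i j = comb_div i' j' -> i = i' /\ j = j'.
Proof.
move=> D_neq0 hij hij' ij_eq.
have e (k : 'I_3) : (i - i') * [:: a; b; c]`_k = (j' - j) * [:: a'; b'; c']`_k.
  by have := comb_divK hij k; rewrite ij_eq comb_divK //; lra.
have [/eqP + /eqP] := cross_gcd_indep _ _ D_neq0 (e 0) (e 1) (e 2).
by rewrite !subr_eq0 => /eqP -> /eqP ->.
Qed.

Lemma int_pt_comb_div (R : realType) i j : D != 0 -> dvd_comb D i j ->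
  int_pt R (comb_div i j) = (i%:~R / D%:~R) *: u + (j%:~R / D%:~R) *: v.
Proof.
move=> D_neq0 hij; apply/rowP => k; have := comb_divK hij k.
rewrite !mxE !nth_intr => z_eq.
have D_neq0R : D%:~R != 0 :> R by rewrite intr_eq0.
apply: (mulIf D_neq0R); rewrite -intrM z_eq intrD !intrM.
by field.
Qed.

Lemma dilate_square_lattice (R : realType) t (z : 'rV[int]_3) : (0 < t)%N -> D != 0 ->
  dilate t (conv [:: 0; u; v; u + v]) (int_pt R z) <->
  exists i j : nat,
    [/\ (i <= t * `|D|)%N, (j <= t * `|D|)%N, dvd_comb D i j & z = comb_div i j].
Proof.
move=> t_gt0 D_neq0.
have D_gt0 : 0 < D by rewrite lt_def D_neq0 /= /cross_gcd /gcdz.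
rewrite dilate_square //; split.
- case=> s [r [s_bnd r_bnd z_eq]].
  have [I [J [sI rJ Dz]]] := cross_gcd_cramer z_eq.
  move: s_bnd r_bnd.
  rewrite (scale_intr_bounds t D_gt0 sI) (scale_intr_bounds t D_gt0 rJ).
  move=> /andP [I_ge0 I_le] /andP [J_ge0 J_le].
  exists `|I|%N, `|J|%N; rewrite !gez0_abs //; split; [lia | lia | |].
    by apply/and3P; split; [move: (Dz 0) | move: (Dz 1) | move: (Dz 2)] => /= <-;
      apply: dvdz_mulr.
  by apply/rowP => k; rewrite mxE -Dz mulKz.
- case=> i [j [i_le j_le hij ->]]; rewrite int_pt_comb_div //.
  exists (i%:~R / D%:~R), (j%:~R / D%:~R); split => //.
  + rewrite (scale_intr_bounds t D_gt0 (_ : _ * D%:~R = i%:~R)); first lia.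
    by rewrite divfK // intr_eq0.
  + rewrite (scale_intr_bounds t D_gt0 (_ : _ * D%:~R = j%:~R)); first lia.
    by rewrite divfK // intr_eq0.
Qed.

Lemma lattice_card_dilate_square (R : realType) t : (0 < t)%N -> D != 0 ->
  lattice_card (@dilate R t (conv [:: 0; u; v; u + v]))
    (\sum_(i < (t * `|D|).+1) \sum_(j < (t * `|D|).+1) dvd_comb D i j).
Proof.
move=> t_gt0 D_neq0; set N := (t * `|D|)%N.
pose P := [pred p : 'I_N.+1 * 'I_N.+1 | dvd_comb D p.1 p.2].
have -> : (\sum_(i < N.+1) \sum_(j < N.+1) dvd_comb D i j)%N = #|P|.
  rewrite -sum1_card pair_bigA [RHS]big_mkcond.
  by apply: eq_bigr => p _; rewrite inE; case: (dvd_comb _ _ _).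
apply: (@lattice_card_image R _ _ P (fun p => comb_div p.1 p.2)).
  move=> [i j] [i' j'] hij hij' /(comb_div_inj D_neq0 hij hij').
  by case=> [[/val_inj /= ->] [/val_inj /= ->]].
move=> z; rewrite dilate_square_lattice //; split.
  case=> i [j [i_le j_le hij ->]].
  by exists (Ordinal (i_le : i < N.+1)%N, Ordinal (j_le : j < N.+1)%N).
by case=> [[i j] hij ->]; exists i, j; split => //; rewrite -ltnS.
Qed.

End SpannedLattice.

Theorem theorem2p2 (R : realType) (a b c a' b' c' : int) :
  (a, b, c) != (0, 0, 0) ->
  (a', b', c') != (0, 0, 0) ->
  a ^+ 2 + b ^+ 2 + c ^+ 2 = a' ^+ 2 + b' ^+ 2 + c' ^+ 2 ->
  a * a' + b * b' + c * c' = 0 ->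
  gcdz a (gcdz b (gcdz c (gcdz a' (gcdz b' c')))) = 1 ->
  let u : 'rV[R]_3 := vec3 a%:~R b%:~R c%:~R in
  let v : 'rV[R]_3 := vec3 a'%:~R b'%:~R c'%:~R in
  let d := gcdz a (gcdz b c) in
  let d' := gcdz a' (gcdz b' c') in
  let D := gcdz (b * c' - b' * c) (gcdz (a * c' - a' * c) (a * b' - a' * b)) in
  ehrhart_poly (conv [:: 0; u; v; u + v])
    ((D%:~R)%:P * 'X^2 + ((d + d')%:~R)%:P * 'X + 1).
Proof.
move=> u_neq0 _ norm_eq orth _ u v d d' D t t_gt0.
have D_neq0 : D != 0 by exact: cross_gcd_neq0.
exists (\sum_(i < (t * `|D|).+1) \sum_(j < (t * `|D|).+1)
          dvd_comb a b c a' b' c' D i j)%N.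
split; first exact: lattice_card_dilate_square.
rewrite sum_dvd_comb_dilate //.
rewrite !(hornerD, hornerM, hornerC, hornerXn, hornerX) intrD -!pmulrn.
by rewrite !natrD !natrM; ring.
Qed.
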